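(* Let $V$, $P$, $v_h$ and $\hat v_h^N$ be as in the context. Then for every integer $N\ge0$, $$\|v_h'-(\hat v_h^N)'\|_{L^2(\mathbb{T})}=O(h^{\frac{N+1}{2}})\quad\text{as }h\to0.$$
   Context: $\mathbb{T}=\mathbb{R}/\mathbb{Z}\cong[-\tfrac12,\tfrac12)$. $V:\mathbb{T}\to\mathbb{R}$ is smooth, symmetric, with a unique non-degenerate minimum at $0$. $\overline H(P)$ is the effective Hamiltonian: the unique constant $c$ for which $\tfrac12(P+\phi')^2+V=c$ has a periodic viscosity solution; $P_{crit}=\inf\{P:\overline H(P)>\min\overline H\}$, and $P>P_{crit}$ is fixed, so that $\overline H(P)>\max V$. For $h>0$, $v_h$ is a periodic solution of $-\tfrac h2v_h''+\tfrac12(P+v_h')^2+V=\overline H_h(P)$, where $\overline H_h(P)$ is the unique constant for which such a periodic solution exists. Put $p^+(x)=\sqrt{2(\overline H(P)-V(x))}>0$ and $\sigma_0=c/p^+$ with $\int_{\mathbb{T}}\sigma_0=1$. Define $\overline H_0=\overline H(P)$, $v_0(x)=\int_{-1/2}^x p^+(s)ds-P(x+\tfrac12)$, and inductively for $j\ge1$: $\overline H_j=\int_{\mathbb{T}}\big[-\tfrac12 v_{j-1}''+\tfrac12\sum_{i=1}^{j-1}v_i'v_{j-i}'\big]\sigma_0\,dx$, and $v_j$ a smooth periodic solution (unique up to additive constant) of $-\tfrac12v_{j-1}''+p^+v_j'+\tfrac12\sum_{i=1}^{j-1}v_i'v_{j-i}'=\overline H_j$. Set $\hat v_h^N=\sum_{j=0}^N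 h^jv_j$. *)

From Stdlib Require Import Reals List.
From Coquelicot Require Import Coquelicot.
Open Scope R_scope.

(* Functions on T = R/Z are represented as 1-periodic functions on R;
   integrals over T are Riemann integrals over [-1/2, 1/2]. *)
Definition periodic1 (f : R -> R) : Prop := forall x, f (x + 1) = f x.

Definition smooth (f : R -> R) : Prop := forall (n : nat) (x : R), ex_derive_n f n x.

Definition C1 (f : R -> R) : Prop :=
  forall x, ex_derive f x /\ continuous (Derive f) x.

Definition Ham (V : R -> R) (P x p : R) : R := 1/2 * (P + p) ^ 2 + V x.

Definition visc_sub (V : R -> R) (P c : R) (phi : R -> R) : Prop :=
  forall (psi : R -> R) (x0 : R), C1 psi ->
    (exists d, 0 < d /\ forall y, Rabs (y - x0) < d ->
        phi y - psi y <= phi x0 - psi x0) ->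
    Ham V P x0 (Derive psi x0) <= c.

Definition visc_super (V : R -> R) (P c : R) (phi : R -> R) : Prop :=
  forall (psi : R -> R) (x0 : R), C1 psi ->
    (exists d, 0 < d /\ forall y, Rabs (y - x0) < d ->
        phi x0 - psi x0 <= phi y - psi y) ->
    c <= Ham V P x0 (Derive psi x0).

(* "The cell problem 1/2 (P + phi')^2 + V = c has a periodic viscosity solution",
   i.e. (by uniqueness of the constant) c = Hbar(P). *)
Definition cell_solvable (V : R -> R) (P c : R) : Prop :=
  exists phi : R -> R, periodic1 phi /\ (forall x, continuous phi x) /\
    visc_sub V P c phi /\ visc_super V P c phi.

(* P > P_crit = inf { Q >= 0 : Hbar(Q) > min Hbar }:
   some Q in [0, P) has Hbar(Q) > Hbar(R) for some R. *)
Definition above_Pcrit (V : R -> R) (P : R) : Prop :=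
  exists Q, 0 <= Q < P /\
    exists cQ R0 cR, cell_solvable V Q cQ /\ cell_solvable V R0 cR /\ cR < cQ.

Definition pplus (V : R -> R) (c x : R) : R := sqrt (2 * (c - V x)).

(* sigma_0 = kappa / p^+ normalized so that its integral over T is 1. *)
Definition sigma0 (V : R -> R) (c x : R) : R :=
  / RInt (fun s => / pplus V c s) (-1/2) (1/2) * / pplus V c x.

Definition v0 (V : R -> R) (P c x : R) : R :=
  RInt (pplus V c) (-1/2) x - P * (x + 1/2).

Definition conv_sum (v : nat -> R -> R) (j : nat) (x : R) : R :=
  fold_right Rplus 0
    (map (fun i => Derive (v i) x * Derive (v (j - i)%nat) x) (seq 1 (j - 1))).

Definition hatv (v : nat -> R -> R) (h : R) (N : nat) (x : R) : R :=
  sum_f_R0 (fun j => h ^ j * v j x) N.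

Definition L2T (f : R -> R) : R := sqrt (RInt (fun x => (f x) ^ 2) (-1/2) (1/2)).

From Pilot Require Import Defs.
From Stdlib Require Import Reals List Lra Lia ZArith.
From Coquelicot Require Import Coquelicot.
Open Scope R_scope.

(* Testing the viscosity sub- and supersolution of the cell problem with periodic antiderivatives
   of (a shift of) p^+ = sqrt (2 (c - V)) shows that, above P_crit, c > max V and
   int_T p^+ = P.  The coefficients a_0 = p^+, a_j = v_j' are then built so that
   U = sum_{j <= N} h^j a_j solves the viscous equation -h/2 U' + 1/2 U^2 + V = sum_j h^j Hs_j up
   to O(h^(N+1)).  Finally, at the extrema of u - U, where u = P + v_h', the derivative terms
   cancel and (u - U)(u + U)/2 is the difference of the two constants up to that residual; since
   u can never vanish (a zero would force a negative slope), u + U is bounded below, so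
   |u - U| = O(h^(N+1)) uniformly, which is stronger than the L^2 estimate. *)

Lemma continuous_plus_R (f g : R -> R) x :
  continuous f x -> continuous g x -> continuous (fun z => f z + g z) x.
Proof. exact (continuous_plus (K := R_AbsRing) (V := R_NormedModule) f g x). Qed.

Lemma continuous_minus_R (f g : R -> R) x :
  continuous f x -> continuous g x -> continuous (fun z => f z - g z) x.
Proof. exact (continuous_minus (K := R_AbsRing) (V := R_NormedModule) f g x). Qed.

Lemma continuous_mult_R (f g : R -> R) x :
  continuous f x -> continuous g x -> continuous (fun z => f z * g z) x.
Proof. exact (continuous_mult (K := R_AbsRing) f g x). Qed.

Lemma ex_derive_continuous_R (f : R -> R) x : ex_derive f x -> continuous f x.
Proof. exact (ex_derive_continuous (K := R_AbsRing) (V := R_NormedModule) f x). Qed.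

Lemma is_derive_continuous_R (f df : R -> R) x : is_derive f x (df x) -> continuous f x.
Proof. intro H; apply ex_derive_continuous_R; exists (df x); exact H. Qed.

Lemma continuous_eps_delta (f : R -> R) x e :
  continuous f x -> 0 < e ->
  exists d, 0 < d /\ forall y, Rabs (y - x) < d -> Rabs (f y - f x) < e.
Proof.
  intros Hc He.
  assert (Hpt : continuity_pt f x) by now apply continuity_pt_filterlim.
  destruct (proj1 (continuity_pt_locally f x) Hpt (mkposreal e He)) as [d Hd].
  exists d; split; [apply cond_pos | exact Hd].
Qed.

Lemma ex_RInt_continuous_R (f : R -> R) a b : (forall x, continuous f x) -> ex_RInt f a b.
Proof. intro Hc; apply (ex_RInt_continuous (V := R_CompleteNormedModule)); auto. Qed.

Lemma is_derive_RInt_R (f : R -> R) a x :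
  (forall y, continuous f y) -> is_derive (fun z => RInt f a z) x (f x).
Proof.
  intro Hc; apply (is_derive_RInt f _ a x); auto.
  apply filter_forall; intro b.
  apply (RInt_correct (V := R_CompleteNormedModule)), ex_RInt_continuous_R; auto.
Qed.

Lemma RInt_T_const (k : R) : RInt (fun _ => k) (-1/2) (1/2) = k.
Proof. rewrite RInt_const; unfold scal; simpl; unfold mult; simpl; field. Qed.

Lemma RInt_T_le (f g : R -> R) :
  (forall x, continuous f x) -> (forall x, continuous g x) ->
  (forall x, f x <= g x) -> RInt f (-1/2) (1/2) <= RInt g (-1/2) (1/2).
Proof. intros; apply RInt_le; try lra; auto using ex_RInt_continuous_R. Qed.

Lemma L2T_le_sup (e : R -> R) E :
  (forall x, continuous e x) -> (forall x, Rabs (e x) <= E) -> L2T e <= E.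
Proof.
  intros Hc Hb; unfold L2T.
  assert (HE : 0 <= E) by (pose proof (Hb 0); pose proof (Rabs_pos (e 0)); lra).
  rewrite <- (sqrt_pow2 E HE); apply sqrt_le_1_alt.
  rewrite <- (RInt_T_const (E ^ 2)); apply RInt_T_le.
  - intro x; apply (continuous_ext (fun x => e x * (e x * 1))); [intro; simpl; auto |].
    apply continuous_mult_R; auto; apply continuous_mult_R; auto using continuous_const.
  - intro; apply continuous_const.
  - intro x; specialize (Hb x); rewrite <- (pow2_abs (e x)).
    apply pow_incr; split; auto using Rabs_pos.
Qed.

Lemma is_derive_zero_const (G : R -> R) a b : (forall z, is_derive G z 0) -> G a = G b.
Proof.
  intro H; destruct (MVT_gen G a b (fun _ => 0)) as [t [_ Ht]]; auto; [| lra].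
  intros; apply continuity_pt_filterlim, (is_derive_continuous_R G (fun _ => 0)), H.
Qed.

(** * Periodic functions *)

Lemma periodic1_nat (f : R -> R) : periodic1 f -> forall n x, f (x + INR n) = f x.
Proof.
  intros Hf n; induction n as [| n IH]; intro x.
  - simpl; now rewrite Rplus_0_r.
  - rewrite S_INR, <- (IH x), <- (Hf (x + INR n)); f_equal; ring.
Qed.

Lemma periodic1_Z (f : R -> R) : periodic1 f -> forall k x, f (x + IZR k) = f x.
Proof.
  intros Hf k x; destruct (Z_le_gt_dec 0 k) as [Hk | Hk].
  - rewrite <- (Z2Nat.id k Hk), <- INR_IZR_INZ; apply periodic1_nat; auto.
  - replace k with (- Z.of_nat (Z.to_nat (- k)))%Z by lia.
    rewrite opp_IZR, <- INR_IZR_INZ, <- (periodic1_nat f Hf (Z.to_nat (- k))).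
    f_equal; ring.
Qed.

Lemma shift_to_unit_interval x : exists k, 0 <= x + IZR k <= 1.
Proof. exists (1 - up x)%Z; rewrite minus_IZR; destruct (archimed x); lra. Qed.

Section PeriodicContinuous.
Variable f : R -> R.
Hypothesis f_periodic : periodic1 f.
Hypothesis f_continuous : forall x, continuous f x.

Lemma periodic1_max : exists x0, forall y, f y <= f x0.
Proof.
  assert (Hpt : forall x, 0 <= x <= 1 -> continuity_pt f x)
    by (intros; apply continuity_pt_filterlim, f_continuous).
  destruct (continuity_ab_maj f 0 1 ltac:(lra) Hpt) as [M [HM _]].
  exists M; intro y; destruct (shift_to_unit_interval y) as [k Hk].
  rewrite <- (periodic1_Z f f_periodic k y); apply HM; auto.
Qed.

Lemma periodic1_min : exists x0, forall y, f x0 <= f y.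
Proof.
  assert (Hpt : forall x, 0 <= x <= 1 -> continuity_pt f x)
    by (intros; apply continuity_pt_filterlim, f_continuous).
  destruct (continuity_ab_min f 0 1 ltac:(lra) Hpt) as [M [HM _]].
  exists M; intro y; destruct (shift_to_unit_interval y) as [k Hk].
  rewrite <- (periodic1_Z f f_periodic k y); apply HM; auto.
Qed.

Lemma periodic1_bounded : exists B, forall y, Rabs (f y) <= B.
Proof.
  destruct periodic1_max as [x1 H1]; destruct periodic1_min as [x2 H2].
  exists (Rmax (Rabs (f x1)) (Rabs (f x2))); intro y.
  specialize (H1 y); specialize (H2 y).
  unfold Rabs, Rmax; repeat destruct Rcase_abs; repeat destruct Rle_dec; lra.
Qed.

Lemma RInt_periodic1_shift z : RInt f 0 (z + 1) - RInt f 0 z = RInt f (-1/2) (1/2).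
Proof.
  assert (Hex : forall a b, ex_RInt f a b) by (intros; apply ex_RInt_continuous_R; auto).
  transitivity (RInt f 0 (-1/2 + 1) - RInt f 0 (-1/2)).
  - apply (is_derive_zero_const (fun z => RInt f 0 (z + 1) - RInt f 0 z)); intro y.
    assert (Hshift : is_derive (fun z => RInt f 0 (z + 1)) y (1 * f (y + 1))).
    { apply (is_derive_comp (fun z => RInt f 0 z) (fun z => z + 1) y (f (y + 1)) 1).
      - apply is_derive_RInt_R; auto.
      - auto_derive; auto. }
    pose proof (is_derive_minus _ _ y _ _ Hshift (is_derive_RInt_R f 0 y f_continuous)) as H.
    now rewrite Rmult_1_l, f_periodic, Rminus_diag in H.
  - replace (-1/2 + 1) with (1/2) by lra.
    rewrite <- (RInt_Chasles f (-1/2) 0 (1/2)), <- (opp_RInt_swap f 0 (-1/2)); auto.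
    unfold plus, opp; simpl; ring.
Qed.

End PeriodicContinuous.

Lemma periodic1_Derive (f : R -> R) : periodic1 f -> periodic1 (Derive f).
Proof.
  intros Hf x; unfold Derive; f_equal; apply Lim_ext; intro y.
  now rewrite Rplus_assoc, (Rplus_comm 1 y), <- Rplus_assoc, !Hf.
Qed.

Lemma is_derive_max_eq0 (f : R -> R) x0 l :
  is_derive f x0 l -> (forall y, f y <= f x0) -> l = 0.
Proof.
  intros Hd Hm.
  assert (H : derivable_pt_lim f x0 l) by now apply is_derive_Reals.
  exact (deriv_maximum f (x0 - 1) (x0 + 1) x0 (exist _ l H) ltac:(lra) ltac:(lra)
           (fun y _ _ => Hm y)).
Qed.

Lemma is_derive_min_eq0 (f : R -> R) x0 l :
  is_derive f x0 l -> (forall y, f x0 <= f y) -> l = 0.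
Proof.
  intros Hd Hm.
  assert (H : derivable_pt_lim f x0 l) by now apply is_derive_Reals.
  exact (deriv_minimum f (x0 - 1) (x0 + 1) x0 (exist _ l H) ltac:(lra) ltac:(lra)
           (fun y _ _ => Hm y)).
Qed.

Lemma periodic1_derive_has_zero (F dF : R -> R) :
  periodic1 F -> (forall x, is_derive F x (dF x)) -> exists z, dF z = 0.
Proof.
  intros Hp Hd.
  destruct (periodic1_max F Hp (fun x => is_derive_continuous_R F dF x (Hd x))) as [z Hz].
  exists z; exact (is_derive_max_eq0 F z _ (Hd z) Hz).
Qed.

Lemma is_derive_neg_right (f : R -> R) x l :
  is_derive f x l -> l < 0 -> forall b, x < b -> exists t, x < t <= b /\ f t < f x.
Proof.
  intros Hd Hl b Hb.
  destruct (proj1 (is_derive_Reals f x l) Hd (- l) ltac:(lra)) as [del Hdel].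
  pose proof (cond_pos del) as Hdel0.
  set (k := Rmin del (b - x) / 2).
  assert (Hk : 0 < k < del /\ k <= b - x).
  { unfold k; pose proof (Rmin_l del (b - x)); pose proof (Rmin_r del (b - x)).
    assert (0 < Rmin del (b - x)) by (apply Rmin_pos; lra). lra. }
  specialize (Hdel k ltac:(lra) ltac:(rewrite Rabs_pos_eq; lra)).
  apply Rabs_def2 in Hdel.
  exists (x + k); split; [lra |].
  assert (Hq : (f (x + k) - f x) / k < 0) by lra.
  assert (E : f (x + k) - f x = (f (x + k) - f x) / k * k) by (field; lra).
  nra.
Qed.

Lemma periodic1_pos_of_derive_neg_at_zeros (u du : R -> R) y0 :
  periodic1 u -> (forall x, is_derive u x (du x)) -> 0 < u y0 ->
  (forall x, u x = 0 -> du x < 0) -> forall x, 0 < u x.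
Proof.
  intros Hp Hd Hy0 Hz x; apply Rnot_le_lt; intro Hx.
  assert (Hc : forall t, continuous u t) by (intro t; apply (is_derive_continuous_R u du), Hd).
  set (y := y0 + IZR (up (x - y0))).
  assert (Hxy : x < y) by (unfold y; destruct (archimed (x - y0)); lra).
  assert (Huy : 0 < u y) by (unfold y; rewrite periodic1_Z; auto).
  (* z is the last point of [x, y] where u is nonpositive *)
  destruct (completeness (fun t => x <= t <= y /\ u t <= 0)) as [z [Hub Hlub]].
  { exists y; intros t [Ht _]; lra. }
  { exists x; split; lra. }
  assert (Hxz : x <= z) by (apply Hub; split; lra).
  assert (Hzy : z <= y) by (apply Hlub; intros t [Ht _]; lra).
  assert (Hright : forall t, z < t <= y -> 0 < u t).
  { intros t Ht; apply Rnot_le_lt; intro Hut.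
    assert (t <= z) by (apply Hub; split; lra). lra. }
  assert (Huz : u z <= 0).
  { apply Rnot_lt_le; intro Hpos.
    destruct (continuous_eps_delta u z (u z) (Hc z) Hpos) as [d [Hd0 Hdd]].
    assert (z <= z - d / 2); [| lra].
    apply Hlub; intros t [Ht1 Ht2]; assert (t <= z) by (apply Hub; split; auto).
    apply Rnot_lt_le; intro Hlt.
    specialize (Hdd t ltac:(apply Rabs_def1; lra)); apply Rabs_def2 in Hdd; lra. }
  assert (Hzy' : z < y) by (destruct Hzy as [| ->]; lra).
  assert (Hu0 : u z = 0).
  { destruct Huz as [Hneg |]; auto; exfalso.
    destruct (continuous_eps_delta u z (- u z) (Hc z) ltac:(lra)) as [d [Hd0 Hdd]].
    set (t := z + Rmin d (y - z) / 2).
    pose proof (Rmin_l d (y - z)); pose proof (Rmin_r d (y - z)).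
    assert (0 < Rmin d (y - z)) by (apply Rmin_pos; lra).
    specialize (Hdd t ltac:(unfold t; apply Rabs_def1; lra)); apply Rabs_def2 in Hdd.
    specialize (Hright t ltac:(unfold t; lra)); lra. }
  destruct (is_derive_neg_right u z (du z) (Hd z) (Hz z Hu0) y Hzy') as [t [Ht Hut]].
  specialize (Hright t Ht); lra.
Qed.

(** * The cell problem *)

Lemma periodic1_antiderivative_test (f : R -> R) lam P' :
  periodic1 f -> (forall x, continuous f x) -> lam * RInt f (-1/2) (1/2) = P' ->
  let psi := fun z => lam * RInt f 0 z - P' * z in
  Defs.C1 psi /\ (forall z, Derive psi z = lam * f z - P') /\ periodic1 psi.
Proof.
  intros Hp Hc HI psi.
  assert (Hd : forall z, is_derive psi z (lam * f z - P')).
  { intro z; apply (is_derive_minus (fun z => lam * RInt f 0 z) (fun z => P' * z)).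
    - apply is_derive_scal, is_derive_RInt_R; auto.
    - auto_derive; auto; ring. }
  assert (HD : forall z, Derive psi z = lam * f z - P') by (intro; apply is_derive_unique, Hd).
  split; [| split]; auto.
  - intro x; split; [exists (lam * f x - P'); apply Hd |].
    apply (continuous_ext (fun z => lam * f z - P')); [intro; now rewrite HD |].
    apply continuous_minus_R, continuous_const.
    apply continuous_mult_R; auto using continuous_const.
  - intro z; unfold psi; pose proof (RInt_periodic1_shift f Hp Hc z); nra.
Qed.

Section CellTests.
Variables (V : R -> R) (P' c' : R) (f : R -> R) (lam : R).
Hypothesis Hcell : cell_solvable V P' c'.
Hypothesis f_periodic : periodic1 f.
Hypothesis f_continuous : forall x, continuous f x.
Hypothesis Hlam : lam * RInt f (-1/2) (1/2) = P'.

(* The viscosity inequality is tested with the periodic psi z := lam * int_0^z f - P' z at an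
   extremum of phi - psi. *)
Lemma cell_subsolution_tested : exists x0, 1/2 * (lam * f x0) ^ 2 + V x0 <= c'.
Proof.
  destruct Hcell as [phi [Hper [Hcont [Hsub _]]]].
  destruct (periodic1_antiderivative_test f lam P' f_periodic f_continuous Hlam)
    as [HC1 [HD Hpp]].
  set (psi := fun z => lam * RInt f 0 z - P' * z) in *.
  destruct (periodic1_max (fun z => phi z - psi z)) as [x0 Hx0].
  - intro z; now rewrite Hper, Hpp.
  - intro z; apply continuous_minus_R; auto.
    apply ex_derive_continuous_R, (HC1 z).
  - exists x0; specialize (Hsub psi x0 HC1 (ex_intro _ 1 (conj Rlt_0_1 (fun y _ => Hx0 y)))).
    unfold Ham in Hsub; rewrite HD in Hsub.
    now replace (P' + (lam * f x0 - P')) with (lam * f x0) in Hsub by ring.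
Qed.

Lemma cell_supersolution_tested : exists x0, c' <= 1/2 * (lam * f x0) ^ 2 + V x0.
Proof.
  destruct Hcell as [phi [Hper [Hcont [_ Hsup]]]].
  destruct (periodic1_antiderivative_test f lam P' f_periodic f_continuous Hlam)
    as [HC1 [HD Hpp]].
  set (psi := fun z => lam * RInt f 0 z - P' * z) in *.
  destruct (periodic1_min (fun z => phi z - psi z)) as [x0 Hx0].
  - intro z; now rewrite Hper, Hpp.
  - intro z; apply continuous_minus_R; auto.
    apply ex_derive_continuous_R, (HC1 z).
  - exists x0; specialize (Hsup psi x0 HC1 (ex_intro _ 1 (conj Rlt_0_1 (fun y _ => Hx0 y)))).
    unfold Ham in Hsup; rewrite HD in Hsup.
    now replace (P' + (lam * f x0 - P')) with (lam * f x0) in Hsup by ring.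
Qed.

End CellTests.

Lemma penalized_local_max (g : R -> R) xs et :
  (forall x, continuous g x) -> 0 < et <= 1/2 ->
  exists eps xe, 0 < eps /\ Rabs (xe - xs) < et /\
    forall y, Rabs (y - xe) < 1/2 -> g y - (y - xs) ^ 2 / eps <= g xe - (xe - xs) ^ 2 / eps.
Proof.
  intros Hg Het.
  assert (Hpt : forall (f : R -> R), (forall x, continuous f x) ->
            forall x, xs - 1 <= x <= xs + 1 -> continuity_pt f x)
    by (intros f Hf x _; apply continuity_pt_filterlim, Hf).
  destruct (continuity_ab_maj (fun z => Rabs (g z)) (xs - 1) (xs + 1) ltac:(lra)
              (Hpt _ (fun z => continuous_Rabs_comp g z (Hg z)))) as [x1 [Hx1 _]].
  set (M := Rabs (g x1)).
  assert (HM : 0 <= M) by apply Rabs_pos.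
  set (eps := et ^ 2 / (2 * M + 1)).
  assert (Heps : 0 < eps) by (unfold eps; apply Rdiv_lt_0_compat; nra).
  set (pen := fun z => g z - (z - xs) ^ 2 / eps).
  assert (Hpen : forall x, continuous pen x).
  { intro x; apply continuous_minus_R; auto.
    apply ex_derive_continuous_R; auto_derive; lra. }
  destruct (continuity_ab_maj pen (xs - 1) (xs + 1) ltac:(lra) (Hpt pen Hpen))
    as [xe [Hxe Hxer]].
  assert (Hclose : Rabs (xe - xs) < et).
  { (* pen xe >= pen xs forces (xe - xs)^2 <= 2 M eps < et^2 *)
    pose proof (Hxe xs ltac:(lra)) as H1; unfold pen in H1.
    pose proof (Hx1 xs ltac:(lra)) as Hs; pose proof (Hx1 xe Hxer) as He; fold M in Hs, He.
    apply Rabs_le_between in Hs; apply Rabs_le_between in He.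
    replace ((xs - xs) ^ 2 / eps) with 0 in H1 by (field; lra).
    assert (Hq : (xe - xs) ^ 2 <= 2 * M * eps).
    { replace ((xe - xs) ^ 2) with ((xe - xs) ^ 2 / eps * eps) by (field; lra). nra. }
    assert (Hlt : 2 * M * eps < et ^ 2).
    { unfold eps; apply (Rmult_lt_reg_r (2 * M + 1)); [lra |].
      replace (2 * M * (et ^ 2 / (2 * M + 1)) * (2 * M + 1)) with (2 * M * et ^ 2)
        by (field; lra). nra. }
    rewrite <- (Rabs_pos_eq et) by lra; apply Rsqr_lt_abs_0; unfold Rsqr; simpl in *; lra. }
  exists eps, xe; split; [exact Heps | split; [exact Hclose |]].
  intros y Hy; apply Hxe.
  apply Rabs_def2 in Hy; apply Rabs_def2 in Hclose; lra.
Qed.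

Lemma cell_solvable_V_le (V : R -> R) P' c' :
  (forall x, continuous V x) -> cell_solvable V P' c' -> forall x, V x <= c'.
Proof.
  intros HV [phi [Hper [Hcont [Hsub _]]]] xs; apply Rnot_lt_le; intro Hlt.
  destruct (continuous_eps_delta V xs (V xs - c') (HV xs) ltac:(lra)) as [eta [Heta Hv]].
  set (et := Rmin (1/2) eta).
  assert (Het : 0 < et <= 1/2) by (split; [apply Rmin_pos | apply Rmin_l]; lra).
  assert (Het2 : et <= eta) by apply Rmin_r.
  destruct (penalized_local_max (fun z => phi z + P' * z) xs et) as [eps [xe [Heps [Hxe Hmax]]]];
    auto.
  { intro z; apply continuous_plus_R; auto.
    apply continuous_mult_R; [apply continuous_const | apply continuous_id]. }
  set (psi := fun z => - P' * z + (z - xs) ^ 2 / eps).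
  assert (Hpsi : Defs.C1 psi).
  { intro x; split; [unfold psi; auto_derive; lra |].
    apply (continuous_ext (fun z => - P' + 2 * (z - xs) / eps)).
    - intro z; symmetry; apply is_derive_unique; unfold psi; auto_derive; [lra | field; lra].
    - apply ex_derive_continuous_R; auto_derive; lra. }
  assert (Hloc : exists d, 0 < d /\ forall y, Rabs (y - xe) < d ->
                   phi y - psi y <= phi xe - psi xe).
  { exists (1/2); split; [lra |]; intros y Hy.
    specialize (Hmax y Hy); unfold psi; lra. }
  specialize (Hsub psi xe Hpsi Hloc); unfold Ham in Hsub.
  pose proof (pow2_ge_0 (P' + Derive psi xe)).
  specialize (Hv xe ltac:(lra)); apply Rabs_def2 in Hv; lra.
Qed.

Lemma pplus_continuous (V : R -> R) c :
  (forall x, continuous V x) -> forall x, continuous (pplus V c) x.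
Proof.
  intros HV x; apply (continuous_sqrt_comp (fun x => 2 * (c - V x))).
  apply continuous_mult_R; [apply continuous_const |].
  apply continuous_minus_R; auto using continuous_const.
Qed.

Lemma pplus_periodic1 (V : R -> R) c : periodic1 V -> periodic1 (pplus V c).
Proof. intros H x; unfold pplus; now rewrite H. Qed.

Lemma pplus_sqr (V : R -> R) c x : V x <= c -> pplus V c x ^ 2 = 2 * (c - V x).
Proof. intro H; apply pow2_sqrt; lra. Qed.

Section EffectiveHamiltonian.
Variable V : R -> R.
Hypothesis V_continuous : forall x, continuous V x.
Hypothesis V_periodic : periodic1 V.

Lemma RInt_pplus_ge P' c' :
  cell_solvable V P' c' -> P' <= RInt (pplus V c') (-1/2) (1/2).
Proof.
  intro Hcell; pose proof (cell_solvable_V_le V P' c' V_continuous Hcell) as Hle.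
  apply Rnot_lt_le; intro Hlt; set (I0 := RInt (pplus V c') (-1/2) (1/2)) in *.
  assert (HI0 : 0 <= I0).
  { apply RInt_ge_0; [lra | | intros; apply sqrt_pos].
    apply ex_RInt_continuous_R, pplus_continuous; auto. }
  (* test with the shifted momentum p^+ + k, scaled by lam > 1 *)
  set (k := (P' - I0) / 2).
  set (lam := P' / (I0 + k)).
  assert (HIk : RInt (fun x => pplus V c' x + k) (-1/2) (1/2) = I0 + k).
  { transitivity (I0 + RInt (fun _ => k) (-1/2) (1/2)); [| now rewrite RInt_T_const].
    apply (RInt_plus (V := R_CompleteNormedModule)).
    - apply ex_RInt_continuous_R, pplus_continuous; auto.
    - apply ex_RInt_continuous_R; intro; apply continuous_const. }
  assert (Hlam : lam * RInt (fun x => pplus V c' x + k) (-1/2) (1/2) = P')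
    by (rewrite HIk; unfold lam, k in *; field; lra).
  destruct (cell_subsolution_tested V P' c' (fun x => pplus V c' x + k) lam Hcell)
    as [x0 Hx0]; auto.
  - intro x; simpl; now rewrite pplus_periodic1.
  - intro x; apply continuous_plus_R; auto using continuous_const, pplus_continuous.
  - pose proof (pplus_sqr V c' x0 (Hle x0)) as Hp2; pose proof (sqrt_pos (2 * (c' - V x0))).
    fold (pplus V c' x0) in *.
    assert (Hk : 0 < k) by (unfold k; lra).
    assert (Hlam1 : 1 < lam).
    { unfold lam; apply (Rmult_lt_reg_r (I0 + k)); [lra |].
      unfold Rdiv; rewrite Rmult_assoc, Rinv_l; unfold k in *; lra. }
    set (p := pplus V c' x0) in *.
    assert (Hgt : p < lam * (p + k)) by nra.
    nra.
Qed.

Lemma RInt_pplus_le P' c' :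
  cell_solvable V P' c' -> 0 <= P' -> (forall x, V x < c') ->
  RInt (pplus V c') (-1/2) (1/2) <= P'.
Proof.
  intros Hcell HP Hlt; apply Rnot_lt_le; intro Hgt.
  set (I := RInt (pplus V c') (-1/2) (1/2)) in *.
  set (lam := P' / I).
  assert (Hlam : lam * I = P') by (unfold lam; field; lra).
  assert (Hlam01 : 0 <= lam < 1).
  { unfold lam; split; [apply Rmult_le_pos; [lra | left; apply Rinv_0_lt_compat; lra] |].
    apply (Rmult_lt_reg_r I); [lra |]; unfold Rdiv; rewrite Rmult_assoc, Rinv_l; lra. }
  destruct (cell_supersolution_tested V P' c' (pplus V c') lam Hcell) as [x0 Hx0];
    auto using pplus_periodic1, pplus_continuous.
  pose proof (pplus_sqr V c' x0 (Rlt_le _ _ (Hlt x0))) as Hp2; specialize (Hlt x0).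
  set (p := pplus V c' x0) in *.
  assert (Hsq : (lam * p) ^ 2 = lam ^ 2 * p ^ 2) by ring.
  assert (Hl2 : lam ^ 2 < 1) by nra.
  nra.
Qed.

Lemma effective_hamiltonian_gap P c :
  above_Pcrit V P -> cell_solvable V P c ->
  exists d, 0 < d /\ (forall x, d <= c - V x) /\ RInt (pplus V c) (-1/2) (1/2) = P.
Proof.
  intros [Q [[HQ0 HQP] [cQ [R0 [cR [HsQ [HsR HcR]]]]]]] Hs.
  pose proof (cell_solvable_V_le V R0 cR V_continuous HsR) as HVR.
  assert (HQb : RInt (pplus V cQ) (-1/2) (1/2) <= Q)
    by (apply (RInt_pplus_le Q cQ); auto; intro x; specialize (HVR x); lra).
  pose proof (RInt_pplus_ge P c Hs) as HPb.
  assert (Hc : cQ < c).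
  { apply Rnot_le_lt; intro Hle.
    assert (RInt (pplus V c) (-1/2) (1/2) <= RInt (pplus V cQ) (-1/2) (1/2)); [| lra].
    apply RInt_T_le; auto using pplus_continuous.
    intro x; apply sqrt_le_1_alt; lra. }
  exists (c - cR); split; [lra | split; [intro x; specialize (HVR x); lra |]].
  apply Rle_antisym; auto.
  apply RInt_pplus_le; auto; [lra | intro x; specialize (HVR x); lra].
Qed.

End EffectiveHamiltonian.

(** * Truncated power series *)

Lemma pow_le_1 h n : 0 <= h <= 1 -> h ^ n <= 1.
Proof. intro Hh; rewrite <- (pow1 n); apply pow_incr; lra. Qed.

Lemma pow_antimono h m n : 0 <= h <= 1 -> (m <= n)%nat -> h ^ n <= h ^ m.
Proof.
  intros Hh Hmn; replace n with (m + (n - m))%nat by lia; rewrite pow_add.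
  pose proof (pow_le_1 h (n - m) Hh); pose proof (pow_le h m (proj1 Hh)); nra.
Qed.

Lemma pow_le_Rpower_half h N : 0 < h < 1 -> h ^ (N + 1) <= Rpower h (INR (N + 1) / 2).
Proof.
  intro Hh; rewrite <- Rpower_pow by lra; unfold Rpower.
  assert (ln h < 0) by (rewrite <- ln_1; apply ln_increasing; lra).
  pose proof (pos_INR (N + 1)).
  destruct (Req_dec (INR (N + 1)) 0) as [E | E].
  - rewrite E; right; f_equal; field.
  - left; apply exp_increasing; nra.
Qed.

Lemma small_mul_lt a b h : 0 <= a -> 0 < h < b / (a + 1) -> h * a < b.
Proof.
  intros Ha [Hh Hlt]; apply (Rmult_lt_compat_r (a + 1)) in Hlt; [| lra].
  replace (b / (a + 1) * (a + 1)) with b in Hlt by (field; lra); nra.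
Qed.

Lemma sum_f_R0_abs_le_const (f : nat -> R) n c :
  (forall i, (i <= n)%nat -> Rabs (f i) <= c) -> Rabs (sum_f_R0 f n) <= INR (S n) * c.
Proof.
  intro Hf; eapply Rle_trans; [apply sum_f_R0_triangle |].
  rewrite Rmult_comm, <- sum_cte; apply sum_Rle; auto.
Qed.

Lemma finite_family_bound (F : nat -> R -> R) n :
  (forall i, exists B, forall x, Rabs (F i x) <= B) ->
  exists B, forall i, (i <= n)%nat -> forall x, Rabs (F i x) <= B.
Proof.
  intro HF; induction n as [| n [B HB]].
  - destruct (HF 0%nat) as [B HB]; exists B; intros i Hi; replace i with 0%nat by lia; auto.
  - destruct (HF (S n)) as [B' HB']; exists (Rmax B B'); intros i Hi x.
    destruct (Nat.eq_dec i (S n)) as [-> |].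
    + eapply Rle_trans; [apply HB' | apply Rmax_r].
    + eapply Rle_trans; [apply HB; lia | apply Rmax_l].
Qed.

Lemma monomial_product_bound h a b n x y B :
  0 <= h <= 1 -> Rabs x <= B -> Rabs y <= B -> (n <= a + b)%nat ->
  Rabs (h ^ a * x * (h ^ b * y)) <= B * B * h ^ n.
Proof.
  intros Hh Hx Hy Hn.
  replace (h ^ a * x * (h ^ b * y)) with (h ^ (a + b) * (x * y)) by (rewrite pow_add; ring).
  rewrite Rabs_mult, Rabs_mult, Rabs_pos_eq by (apply pow_le; lra).
  pose proof (pow_antimono h n (a + b) Hh Hn); pose proof (pow_le h (a + b) ltac:(lra)).
  pose proof (Rabs_pos x); pose proof (Rabs_pos y).
  assert (Rabs x * Rabs y <= B * B) by (apply Rmult_le_compat; auto).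
  assert (0 <= B * B) by nra.
  nra.
Qed.

Definition sqr_coef (A : nat -> R) (k : nat) : R := sum_f_R0 (fun p => A p * A (k - p)%nat) k.

Lemma sum_f_R0_seq (f : nat -> R) n s :
  fold_right Rplus 0 (map f (seq s (S n))) = sum_f_R0 (fun i => f (s + i)%nat) n.
Proof.
  revert s; induction n as [| n IH]; intro s.
  - simpl; rewrite Nat.add_0_r; ring.
  - change (f s + fold_right Rplus 0 (map f (seq (S s) (S n)))
            = sum_f_R0 (fun i => f (s + i)%nat) (S n)).
    rewrite IH, (decomp_sum (fun i => f (s + i)%nat) (S n)) by lia; simpl pred.
    rewrite Nat.add_0_r; f_equal; apply sum_eq; intros; f_equal; lia.
Qed.

Lemma sqr_coef_conv_sum (A : nat -> R) (v : nat -> R -> R) x k : (1 <= k)%nat ->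
  (forall i, (1 <= i)%nat -> A i = Derive (v i) x) ->
  sqr_coef A k = 2 * A 0%nat * A k + conv_sum v k x.
Proof.
  intros Hk HA; unfold sqr_coef, conv_sum.
  destruct k as [| [| k]]; [lia | simpl; ring |].
  rewrite tech5, decomp_sum by lia; simpl pred.
  replace (S (S k) - 1)%nat with (S k) by lia; rewrite sum_f_R0_seq.
  replace (S (S k) - 0)%nat with (S (S k)) by lia.
  replace (S (S k) - S (S k))%nat with 0%nat by lia.
  rewrite (sum_eq _ (fun i => Derive (v (1 + i)%nat) x * Derive (v (S (S k) - (1 + i))%nat) x));
    [ring |].
  intros i Hi; rewrite !HA by lia; reflexivity.
Qed.

Lemma sqr_series_truncation (A : nat -> R) h B N :
  0 <= h <= 1 -> (forall i, (i <= N)%nat -> Rabs (A i) <= B) ->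
  exists T, (sum_f_R0 (fun i => h ^ i * A i) N) ^ 2
              = sum_f_R0 (fun k => h ^ k * sqr_coef A k) N + T
         /\ Rabs T <= INR (S N) * INR (S N) * (B * B) * h ^ (S N).
Proof.
  intros Hh HB.
  assert (HB0 : 0 <= B) by (pose proof (HB 0%nat (Nat.le_0_l _)); pose proof (Rabs_pos (A 0%nat)); lra).
  destruct N as [| n].
  { exists 0; simpl; split; [unfold sqr_coef; simpl; ring | rewrite Rabs_R0; nra]. }
  set (b := fun i => h ^ i * A i).
  (* the terms of degree > S n dropped from the Cauchy product *)
  exists (sum_f_R0 (fun k => sum_f_R0 (fun l => b (S (l + k)) * b (S n - l)%nat)
                                    (pred (S n - k))) (pred (S n))).
  split.
  - replace (sum_f_R0 b (S n) ^ 2) with (sum_f_R0 b (S n) * sum_f_R0 b (S n)) by ring.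
    rewrite cauchy_finite by lia.
    f_equal; apply sum_eq; intros k Hk; unfold sqr_coef; rewrite scal_sum.
    apply sum_eq; intros p Hp; unfold b.
    replace (h ^ k) with (h ^ p * h ^ (k - p)) by (rewrite <- pow_add; f_equal; lia); ring.
  - set (c := B * B * h ^ S (S n)).
    assert (Hterm : forall k l, (l <= S n)%nat -> (S (l + k) <= S n)%nat ->
                      Rabs (b (S (l + k)) * b (S n - l)%nat) <= c).
    { intros k l Hl Hlk; apply monomial_product_bound; auto; [apply HB; lia | lia]. }
    assert (Hc : 0 <= c) by (unfold c; apply Rmult_le_pos; [nra | apply pow_le; lra]).
    assert (HN : forall m, (m <= S n)%nat -> INR (S m) <= INR (S (S n)))
      by (intros; apply le_INR; lia).
    eapply Rle_trans.
    { apply (sum_f_R0_abs_le_const _ _ (INR (S (S n)) * c)); intros k Hk.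
      eapply Rle_trans.
      - apply (sum_f_R0_abs_le_const _ _ c); intros l Hl; apply Hterm; lia.
      - apply Rmult_le_compat_r; [lra | apply HN; lia]. }
    pose proof (HN (pred (S n)) ltac:(lia)); pose proof (pos_INR (S (S n))).
    replace (INR (S (S n)) * INR (S (S n)) * (B * B) * h ^ S (S n))
      with (INR (S (S n)) * (INR (S (S n)) * c)) by (unfold c; ring).
    apply Rmult_le_compat_r; nra.
Qed.

Section TruncatedExpansion.
Variables (A dA Hs : nat -> R) (Vx : R).
Hypothesis Hs_0 : Hs 0%nat = sqr_coef A 0 / 2 + Vx.
Hypothesis Hs_S : forall j, (1 <= j)%nat -> Hs j = sqr_coef A j / 2 - dA (j - 1)%nat / 2.

Lemma Hs_series h N :
  sum_f_R0 (fun j => h ^ j * Hs j) N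
  = 1/2 * sum_f_R0 (fun j => h ^ j * sqr_coef A j) N + Vx
    - h / 2 * sum_f_R0 (fun j => h ^ j * dA j) N + 1/2 * h ^ S N * dA N.
Proof.
  induction N as [| N IH].
  - simpl; rewrite Hs_0; field.
  - rewrite !tech5, IH, (Hs_S (S N)) by lia.
    replace (S N - 1)%nat with N by lia; simpl; field.
Qed.

Lemma truncated_expansion_residual h B N :
  0 <= h <= 1 -> (forall i, (i <= N)%nat -> Rabs (A i) <= B /\ Rabs (dA i) <= B) ->
  Rabs (- h / 2 * sum_f_R0 (fun j => h ^ j * dA j) N
        + 1/2 * (sum_f_R0 (fun j => h ^ j * A j) N) ^ 2 + Vx
        - sum_f_R0 (fun j => h ^ j * Hs j) N)
  <= (INR (S N) * INR (S N) * (B * B) + B) * h ^ S N.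
Proof.
  intros Hh HB.
  destruct (sqr_series_truncation A h B N Hh) as [T [HT HTb]]; [intros; apply HB; auto |].
  rewrite HT, Hs_series.
  match goal with |- Rabs ?X <= _ => replace X with (T / 2 - 1/2 * h ^ S N * dA N) by field end.
  destruct (HB N (le_n N)) as [_ HdN].
  pose proof (pow_le h (S N) ltac:(lra)) as Hpow.
  assert (HB0 : 0 <= B) by (pose proof (Rabs_pos (dA N)); lra).
  assert (Rabs (1/2 * h ^ S N * dA N) <= B * h ^ S N).
  { rewrite !Rabs_mult, (Rabs_pos_eq (1/2)), (Rabs_pos_eq (h ^ S N)) by lra. nra. }
  assert (Rabs (T / 2) <= INR (S N) * INR (S N) * (B * B) * h ^ S N).
  { unfold Rdiv; rewrite Rabs_mult, (Rabs_pos_eq (/ 2)) by lra.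
    pose proof (Rabs_pos T); nra. }
  eapply Rle_trans; [apply Rabs_triang | rewrite Rabs_Ropp; lra].
Qed.

End TruncatedExpansion.

Lemma sum_pow_first_term (A : nat -> R) h B n :
  0 <= h <= 1 -> (forall j, (j <= n)%nat -> Rabs (A j) <= B) ->
  Rabs (sum_f_R0 (fun j => h ^ j * A j) n - A 0%nat) <= h * (INR (S n) * B).
Proof.
  intros Hh HB.
  assert (HB0 : 0 <= B) by (pose proof (HB 0%nat (Nat.le_0_l _)); pose proof (Rabs_pos (A 0%nat)); lra).
  induction n as [| n IH].
  - simpl; replace (1 * A 0%nat - A 0%nat) with 0 by ring; rewrite Rabs_R0; nra.
  - rewrite tech5.
    replace (sum_f_R0 (fun j => h ^ j * A j) n + h ^ S n * A (S n) - A 0%nat)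
      with ((sum_f_R0 (fun j => h ^ j * A j) n - A 0%nat) + h ^ S n * A (S n)) by ring.
    eapply Rle_trans; [apply Rabs_triang |].
    specialize (IH ltac:(intros; apply HB; lia)).
    rewrite Rabs_mult, (Rabs_pos_eq (h ^ S n)) by (apply pow_le; lra).
    assert (h ^ S n <= h) by (rewrite <- (pow_1 h) at 2; apply pow_antimono; auto; lia).
    pose proof (HB (S n) (le_n _)); pose proof (Rabs_pos (A (S n))).
    assert (h ^ S n * Rabs (A (S n)) <= h * B)
      by (apply Rmult_le_compat; auto; apply pow_le; lra).
    rewrite S_INR; nra.
Qed.

Lemma is_derive_weighted_sum (f df : nat -> R -> R) h n x :
  (forall j, is_derive (f j) x (df j x)) ->
  is_derive (fun y => sum_f_R0 (fun j => h ^ j * f j y) n) x (sum_f_R0 (fun j => h ^ j * df j x) n).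
Proof.
  intro H; induction n as [| n IH].
  - apply is_derive_scal, H.
  - apply (is_derive_plus (fun y => sum_f_R0 (fun j => h ^ j * f j y) n)); auto.
    apply is_derive_scal, H.
Qed.

Lemma hatv_periodic1 v h n : (forall j, periodic1 (v j)) -> periodic1 (hatv v h n).
Proof. intros H x; unfold hatv; apply sum_eq; intros; now rewrite (H i). Qed.

(** * A comparison principle for the viscous equation *)

Section ViscousComparison.
Variables (V : R -> R) (h H Hhat eps m : R) (u du U dU : R -> R).
Hypothesis h_pos : 0 < h.
Hypothesis m_pos : 0 < m.
Hypothesis u_periodic : periodic1 u.
Hypothesis U_periodic : periodic1 U.
Hypothesis u_derive : forall x, is_derive u x (du x).
Hypothesis U_derive : forall x, is_derive U x (dU x).
Hypothesis u_solves : forall x, - h / 2 * du x + 1/2 * u x ^ 2 + V x = H.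
Hypothesis U_residual : forall x, Rabs (- h / 2 * dU x + 1/2 * U x ^ 2 + V x - Hhat) <= eps.
Hypothesis U_ge : forall x, m <= U x.
Hypothesis V_lt : forall x, V x < Hhat - eps.
Hypothesis u_U_touch : exists z, u z = U z.

Lemma viscous_difference_at_critical x :
  du x = dU x ->
  (u x - U x) * (u x + U x) / 2
  = (H - Hhat) - (- h / 2 * dU x + 1/2 * U x ^ 2 + V x - Hhat).
Proof. intro Hx; rewrite <- (u_solves x), Hx; field. Qed.

Lemma viscous_comparison : forall x, Rabs (u x - U x) <= 4 * eps / m.
Proof.
  set (e := fun x => u x - U x).
  assert (He : forall x, is_derive e x (du x - dU x))
    by (intro x; apply (is_derive_minus u U); auto).
  assert (Hec : forall x, continuous e x)
    by (intro x; apply (is_derive_continuous_R e (fun y => du y - dU y) x), He).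
  assert (Hep : periodic1 e) by (intro x; unfold e; now rewrite u_periodic, U_periodic).
  destruct (periodic1_max e Hep Hec) as [x1 Hx1].
  destruct (periodic1_min e Hep Hec) as [x2 Hx2].
  assert (Hd1 : du x1 = dU x1) by (pose proof (is_derive_max_eq0 e x1 _ (He x1) Hx1); lra).
  assert (Hd2 : du x2 = dU x2) by (pose proof (is_derive_min_eq0 e x2 _ (He x2) Hx2); lra).
  pose proof (viscous_difference_at_critical x1 Hd1) as K1.
  pose proof (viscous_difference_at_critical x2 Hd2) as K2.
  change (u x1 - U x1) with (e x1) in K1; change (u x2 - U x2) with (e x2) in K2.
  destruct u_U_touch as [z Hz].
  assert (He1 : 0 <= e x1) by (specialize (Hx1 z); unfold e in *; lra).
  assert (He2 : e x2 <= 0) by (specialize (Hx2 z); unfold e in *; lra).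
  pose proof (U_residual x1) as Hr1; pose proof (U_residual x2) as Hr2.
  apply Rabs_le_between in Hr1; apply Rabs_le_between in Hr2.
  pose proof (U_ge x1); pose proof (U_ge x2).
  assert (HHlow : Hhat - eps <= H).
  { assert (0 <= e x1 * (u x1 + U x1)) by (apply Rmult_le_pos; unfold e in *; lra). lra. }
  (* H exceeds V, so u can never vanish: at a zero its slope would be negative *)
  assert (Hupos : forall x, 0 < u x).
  { apply (periodic1_pos_of_derive_neg_at_zeros u du x1); auto.
    - unfold e in He1; lra.
    - intros x Hux; pose proof (u_solves x) as Hx; rewrite Hux in Hx.
      specialize (V_lt x); nra. }
  pose proof (Hupos x2).
  assert (HHup : H <= Hhat + eps).
  { assert (0 <= - e x2 * (u x2 + U x2)) by (apply Rmult_le_pos; lra). lra. }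
  assert (Hb1 : e x1 * m <= 2 * eps) by (unfold e in *; nra).
  assert (Hb2 : - e x2 * m <= 4 * eps) by (unfold e in *; nra).
  intro x; specialize (Hx1 x); specialize (Hx2 x); fold (e x).
  apply Rabs_le; split; apply (Rmult_le_reg_r m); auto;
    unfold Rdiv; rewrite ?Ropp_mult_distr_l_reverse, Rmult_assoc, Rinv_l; nra.
Qed.

End ViscousComparison.

(** * The asymptotic expansion *)

Section AsymptoticExpansion.
Variables (V : R -> R) (P c d : R) (v : nat -> R -> R) (Hs : nat -> R).
Hypothesis V_smooth : smooth V.
Hypothesis V_periodic : periodic1 V.
Hypothesis d_pos : 0 < d.
Hypothesis c_gap : forall x, d <= c - V x.
Hypothesis RInt_pplus : RInt (pplus V c) (-1/2) (1/2) = P.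
Hypothesis v_0 : forall x, v 0%nat x = v0 V P c x.
Hypothesis Hs_0 : Hs 0%nat = c.
Hypothesis v_S_smooth : forall j, (1 <= j)%nat -> smooth (v j).
Hypothesis v_S_periodic : forall j, (1 <= j)%nat -> periodic1 (v j).
Hypothesis v_S_eq : forall j, (1 <= j)%nat -> forall x,
  -1/2 * Derive_n (v (j - 1)%nat) 2 x + pplus V c x * Derive (v j) x + 1/2 * conv_sum v j x
  = Hs j.

Lemma V_continuous x : continuous V x.
Proof. apply ex_derive_continuous_R, (V_smooth 1%nat). Qed.

Lemma pplus_ge x : sqrt (2 * d) <= pplus V c x.
Proof. apply sqrt_le_1_alt; specialize (c_gap x); lra. Qed.

Lemma pplus_pos x : 0 < pplus V c x.
Proof. apply Rlt_le_trans with (sqrt (2 * d)); [apply sqrt_lt_R0; lra | apply pplus_ge]. Qed.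

Lemma is_derive_pplus x : is_derive (pplus V c) x (- Derive V x / pplus V c x).
Proof.
  assert (H : is_derive (fun x => 2 * (c - V x)) x (2 * (0 - Derive V x))).
  { apply is_derive_scal, (is_derive_minus (fun _ => c) V).
    - exact (is_derive_const (K := R_AbsRing) c x).
    - apply Derive_correct, (V_smooth 1%nat). }
  pose proof (is_derive_sqrt _ x _ H ltac:(specialize (c_gap x); lra)) as Hsqrt.
  pose proof (pplus_pos x) as Hp; unfold pplus in *.
  replace (- Derive V x / sqrt (2 * (c - V x)))
    with (2 * (0 - Derive V x) / (2 * sqrt (2 * (c - V x)))) by (field; lra).
  exact Hsqrt.
Qed.

Lemma is_derive_v0 x : is_derive (v 0%nat) x (pplus V c x - P).
Proof.
  apply (is_derive_ext (v0 V P c)); [intro; now rewrite v_0 |].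
  apply (is_derive_minus (fun x => RInt (pplus V c) (-1/2) x) (fun x => P * (x + 1/2))).
  - apply is_derive_RInt_R, pplus_continuous, V_continuous.
  - auto_derive; auto; ring.
Qed.

Lemma v0_periodic1 : periodic1 (v 0%nat).
Proof.
  intro x; rewrite !v_0; unfold v0.
  pose proof (pplus_continuous V c V_continuous) as Hc.
  assert (Ch : forall y, RInt (pplus V c) (-1/2) y
                         = RInt (pplus V c) (-1/2) 0 + RInt (pplus V c) 0 y)
    by (intro y; symmetry; apply (RInt_Chasles (V := R_CompleteNormedModule));
        apply ex_RInt_continuous_R; auto).
  rewrite (Ch (x + 1)), (Ch x).
  pose proof (RInt_periodic1_shift _ (pplus_periodic1 V c V_periodic) Hc x); lra.
Qed.

Lemma v_periodic1 j : periodic1 (v j).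
Proof. destruct j; [apply v0_periodic1 | apply v_S_periodic; lia]. Qed.

Lemma v_ex_derive j x : ex_derive (v j) x.
Proof.
  destruct j; [eexists; apply is_derive_v0 | exact (v_S_smooth (S j) ltac:(lia) 1%nat x)].
Qed.

(* a_0 = p^+ = P + v_0' and a_j = v_j' (j >= 1): the coefficients of the expansion of P + v_h'. *)
Definition momentum (j : nat) (x : R) : R :=
  match j with O => pplus V c x | S _ => Derive (v j) x end.

Lemma momentum_ex_derive j x : ex_derive (momentum j) x.
Proof.
  destruct j; [eexists; apply is_derive_pplus | exact (v_S_smooth (S j) ltac:(lia) 2%nat x)].
Qed.

Lemma momentum_Derive_continuous j x : continuous (Derive (momentum j)) x.
Proof.
  destruct j.
  - apply (continuous_ext (fun x => - Derive V x / pplus V c x)).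
    { intro; symmetry; apply is_derive_unique, is_derive_pplus. }
    apply continuity_pt_filterlim, continuity_pt_div.
    + apply continuity_pt_opp, continuity_pt_filterlim, ex_derive_continuous_R, (V_smooth 2%nat).
    + apply continuity_pt_filterlim, pplus_continuous, V_continuous.
    + apply Rgt_not_eq, pplus_pos.
  - apply ex_derive_continuous_R, (v_S_smooth (S j) ltac:(lia) 3%nat).
Qed.

Lemma momentum_periodic1 j : periodic1 (momentum j).
Proof.
  intro x; destruct j; simpl.
  - now apply pplus_periodic1.
  - apply periodic1_Derive, v_periodic1.
Qed.

Lemma Derive_n_v_momentum k x : Derive_n (v k) 2 x = Derive (momentum k) x.
Proof.
  destruct k; [| reflexivity].
  simpl; rewrite (Derive_ext (Derive (v 0%nat)) (fun y => pplus V c y - P)).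
  - change (Derive (momentum 0) x) with (Derive (pplus V c) x).
    rewrite <- (Rminus_0_r (Derive (pplus V c) x)).
    apply is_derive_unique, (is_derive_minus (pplus V c) (fun _ => P)).
    + apply Derive_correct, (momentum_ex_derive 0).
    + exact (is_derive_const (K := R_AbsRing) P x).
  - intro; apply is_derive_unique, is_derive_v0.
Qed.

Lemma momentum_recursion_0 x : Hs 0%nat = sqr_coef (fun i => momentum i x) 0 / 2 + V x.
Proof.
  unfold sqr_coef; simpl; rewrite Hs_0.
  pose proof (pplus_sqr V c x ltac:(specialize (c_gap x); lra)); simpl in *; lra.
Qed.

Lemma momentum_recursion j x : (1 <= j)%nat ->
  Hs j = sqr_coef (fun i => momentum i x) j / 2 - Derive (momentum (j - 1)) x / 2.
Proof.
  intro Hj; rewrite <- (v_S_eq j Hj x), Derive_n_v_momentum.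
  rewrite (sqr_coef_conv_sum _ v x j Hj) by (intros [| i] Hi; [lia | reflexivity]).
  destruct j; [lia |]; simpl; field.
Qed.

Definition hat_momentum (h : R) (N : nat) (x : R) : R :=
  sum_f_R0 (fun j => h ^ j * momentum j x) N.

Definition hat_Hs (h : R) (N : nat) : R := sum_f_R0 (fun j => h ^ j * Hs j) N.

Lemma is_derive_hat_momentum h N x :
  is_derive (hat_momentum h N) x (sum_f_R0 (fun j => h ^ j * Derive (momentum j) x) N).
Proof.
  exact (is_derive_weighted_sum momentum (fun j => Derive (momentum j)) h N x
           (fun j => Derive_correct _ _ (momentum_ex_derive j x))).
Qed.

Lemma hat_momentum_periodic1 h N : periodic1 (hat_momentum h N).
Proof. intro x; unfold hat_momentum; apply sum_eq; intros; now rewrite momentum_periodic1. Qed.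

Lemma is_derive_hatv h N x :
  is_derive (hatv v h N) x (sum_f_R0 (fun j => h ^ j * Derive (v j) x) N).
Proof.
  exact (is_derive_weighted_sum v (fun j => Derive (v j)) h N x
           (fun j => Derive_correct _ _ (v_ex_derive j x))).
Qed.

Lemma Derive_hatv h N x : Derive (hatv v h N) x = hat_momentum h N x - P.
Proof.
  rewrite (is_derive_unique _ _ _ (is_derive_hatv h N x)); unfold hat_momentum.
  induction N as [| N IH].
  - simpl; rewrite (is_derive_unique _ _ _ (is_derive_v0 x)); ring.
  - rewrite !tech5, IH; simpl; ring.
Qed.

Lemma Derive_hatv_continuous h N x : continuous (Derive (hatv v h N)) x.
Proof.
  apply (continuous_ext (fun y => hat_momentum h N y - P)); [intro; now rewrite Derive_hatv |].
  apply continuous_minus_R; [| apply continuous_const].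
  exact (is_derive_continuous_R (hat_momentum h N)
           (fun y => sum_f_R0 (fun j => h ^ j * Derive (momentum j) y) N) x
           (is_derive_hat_momentum h N x)).
Qed.

Lemma momentum_bounded N : exists B, forall i, (i <= N)%nat -> forall x,
  Rabs (momentum i x) <= B /\ Rabs (Derive (momentum i) x) <= B.
Proof.
  assert (Hb : forall i, exists B, forall x, Rabs (momentum i x) <= B).
  { intro i; apply periodic1_bounded; [apply momentum_periodic1 |].
    intro x; apply ex_derive_continuous_R, momentum_ex_derive. }
  assert (Hdb : forall i, exists B, forall x, Rabs (Derive (momentum i) x) <= B).
  { intro i; apply periodic1_bounded; [apply periodic1_Derive, momentum_periodic1 |].
    apply momentum_Derive_continuous. }
  destruct (finite_family_bound _ N Hb) as [B1 HB1].
  destruct (finite_family_bound _ N Hdb) as [B2 HB2].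
  exists (Rmax B1 B2); intros i Hi x; split.
  - eapply Rle_trans; [apply HB1; auto | apply Rmax_l].
  - eapply Rle_trans; [apply HB2; auto | apply Rmax_r].
Qed.

Lemma hat_momentum_residual h N B :
  0 <= h <= 1 ->
  (forall i, (i <= N)%nat -> forall x,
     Rabs (momentum i x) <= B /\ Rabs (Derive (momentum i) x) <= B) ->
  forall y, Rabs (- h / 2 * Derive (hat_momentum h N) y + 1/2 * hat_momentum h N y ^ 2
                  + V y - hat_Hs h N)
            <= (INR (S N) * INR (S N) * (B * B) + B) * h ^ S N.
Proof.
  intros Hh HB y; rewrite (is_derive_unique _ _ _ (is_derive_hat_momentum h N y)).
  apply (truncated_expansion_residual (fun i => momentum i y) (fun i => Derive (momentum i) y) Hs (V y));
    auto using momentum_recursion_0, momentum_recursion.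
Qed.

Lemma hat_momentum_ge h N B :
  0 <= h <= 1 -> (forall i, (i <= N)%nat -> forall x, Rabs (momentum i x) <= B) ->
  h * (INR (S N) * B) < sqrt (2 * d) / 2 ->
  forall y, sqrt (2 * d) / 2 <= hat_momentum h N y.
Proof.
  intros Hh HB Hsmall y.
  pose proof (sum_pow_first_term (fun j => momentum j y) h B N Hh (fun j Hj => HB j Hj y))
    as Hclose.
  apply Rabs_le_between in Hclose; pose proof (pplus_ge y).
  change (momentum 0 y) with (pplus V c y) in Hclose; unfold hat_momentum; lra.
Qed.

Lemma hat_Hs_gap h N BH eps :
  0 <= h <= 1 -> (forall i, (i <= N)%nat -> Rabs (Hs i) <= BH) ->
  h * (INR (S N) * BH) + eps < d ->
  forall y, V y < hat_Hs h N - eps.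
Proof.
  intros Hh HBH Hsmall y.
  pose proof (sum_pow_first_term Hs h BH N Hh HBH) as Hclose.
  apply Rabs_le_between in Hclose; rewrite Hs_0 in Hclose.
  specialize (c_gap y); unfold hat_Hs; lra.
Qed.

Variables (vh : R -> R -> R) (Hh : R -> R).
Hypothesis vh_solves : forall h, 0 < h ->
  periodic1 (vh h) /\
  (forall x, ex_derive (vh h) x /\ ex_derive (Derive (vh h)) x) /\
  (forall x, - h / 2 * Derive (Derive (vh h)) x + 1/2 * (P + Derive (vh h) x) ^ 2 + V x = Hh h).

Lemma vh_touches_hat_momentum h N : 0 < h -> exists z, P + Derive (vh h) z = hat_momentum h N z.
Proof.
  intro Hpos; destruct (vh_solves h Hpos) as [Hvhp [Hvhd _]].
  destruct (periodic1_derive_has_zero (fun y => vh h y - hatv v h N y)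
              (fun y => Derive (vh h) y - Derive (hatv v h N) y)) as [z Hz].
  - intro y; now rewrite Hvhp, (hatv_periodic1 v h N v_periodic1).
  - intro y; apply (is_derive_minus (vh h) (hatv v h N)); apply Derive_correct; [apply Hvhd |].
    eexists; apply is_derive_hatv.
  - exists z; rewrite Derive_hatv in Hz; lra.
Qed.

Lemma hatv_derivative_error N : exists C h0, 0 < h0 /\ 0 <= C /\
  forall h, 0 < h < h0 -> forall x,
    Rabs (Derive (vh h) x - Derive (hatv v h N) x) <= C * h ^ (N + 1).
Proof.
  set (m := sqrt (2 * d)); assert (Hm : 0 < m) by (apply sqrt_lt_R0; lra).
  destruct (momentum_bounded N) as [B HB].
  destruct (finite_family_bound (fun i _ => Hs i) N) as [BH HBH].
  { intro i; exists (Rabs (Hs i)); intros; apply Rle_refl. }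
  pose proof (pos_INR (S N)).
  assert (HB0 : 0 <= B) by (pose proof (Rabs_pos (momentum 0 0)); pose proof (HB 0%nat (Nat.le_0_l _) 0); lra).
  assert (HBH0 : 0 <= BH) by (pose proof (Rabs_pos (Hs 0%nat)); pose proof (HBH 0%nat (Nat.le_0_l _) 0); lra).
  set (K := INR (S N) * INR (S N) * (B * B) + B).
  assert (HK : 0 <= K) by (unfold K; nra).
  set (L := INR (S N) * B); set (SH := INR (S N) * BH).
  exists (8 * K / m), (Rmin 1 (Rmin (m / 2 / (L + 1)) (d / (SH + K + 1)))).
  split; [repeat apply Rmin_pos; try apply Rdiv_lt_0_compat; unfold L, SH; nra |].
  split; [apply Rmult_le_pos; [lra | apply Rlt_le, Rinv_0_lt_compat; lra] |].
  intros h [Hpos Hsmall] x.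
  apply Rmin_Rgt in Hsmall; destruct Hsmall as [Hh1 Hsmall]; apply Rmin_Rgt in Hsmall.
  pose proof (small_mul_lt L (m / 2) h ltac:(unfold L; nra) ltac:(lra)) as HhL.
  pose proof (small_mul_lt (SH + K) d h ltac:(unfold SH; nra) ltac:(lra)) as HhK.
  assert (Hpow : h ^ S N <= h) by (rewrite <- (pow_1 h) at 2; apply pow_antimono; [lra | lia]).
  destruct (vh_solves h Hpos) as [Hvhp [Hvhd Hvheq]].
  replace (Derive (vh h) x - Derive (hatv v h N) x)
    with ((P + Derive (vh h) x) - hat_momentum h N x) by (rewrite Derive_hatv; ring).
  replace (8 * K / m * h ^ (N + 1)) with (4 * (K * h ^ S N) / (m / 2))
    by (rewrite Nat.add_1_r; field; lra).
  apply (viscous_comparison V h (Hh h) (hat_Hs h N) (K * h ^ S N) (m / 2)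
           (fun y => P + Derive (vh h) y) (Derive (Derive (vh h)))
           (hat_momentum h N) (Derive (hat_momentum h N))); auto; try lra.
  - intro y; simpl; now rewrite periodic1_Derive.
  - apply hat_momentum_periodic1.
  - intro y; rewrite <- (Rplus_0_l (Derive (Derive (vh h)) y)).
    apply (is_derive_plus (fun _ => P)); [exact (is_derive_const (K := R_AbsRing) P y) |].
    apply Derive_correct, Hvhd.
  - intro y; apply Derive_correct; eexists; apply is_derive_hat_momentum.
  - apply hat_momentum_residual; [lra | auto].
  - apply (hat_momentum_ge h N B); [lra | intros i Hi y; apply HB; auto | auto].
  - apply (hat_Hs_gap h N BH); [lra | intros i Hi; apply (HBH i Hi 0) |].
    assert (K * h ^ S N <= K * h) by (apply Rmult_le_compat_l; lra). unfold SH in HhK; nra.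
  - apply vh_touches_hat_momentum; auto.
Qed.

Lemma L2T_hatv_derivative_error N : exists C h0, 0 < h0 /\ 0 <= C /\
  forall h, 0 < h < h0 ->
    L2T (fun x => Derive (vh h) x - Derive (hatv v h N) x) <= C * h ^ (N + 1).
Proof.
  destruct (hatv_derivative_error N) as [C [h0 [Hh0 [HC Herr]]]].
  exists C, h0; split; [exact Hh0 | split; [exact HC |]].
  intros h Hsmall; apply L2T_le_sup; [| apply Herr; auto].
  intro x; apply continuous_minus_R; [| apply Derive_hatv_continuous].
  apply ex_derive_continuous_R, (vh_solves h (proj1 Hsmall)).
Qed.

End AsymptoticExpansion.

Theorem mainTheorem5 :
  forall (V : R -> R),
    smooth V -> periodic1 V -> (forall x, V (- x) = V x) ->
    (forall x, -1/2 <= x < 1/2 -> x <> 0 -> V 0 < V x) ->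
    0 < Derive_n V 2 0 ->
  forall (P c : R),
    above_Pcrit V P ->
    cell_solvable V P c ->
  forall (v : nat -> R -> R) (Hs : nat -> R),
    (forall x, v 0%nat x = v0 V P c x) ->
    Hs 0%nat = c ->
    (forall j : nat, (1 <= j)%nat ->
       Hs j = RInt (fun x => (-1/2 * Derive_n (v (j - 1)%nat) 2 x
                               + 1/2 * conv_sum v j x) * sigma0 V c x) (-1/2) (1/2)
       /\ smooth (v j) /\ periodic1 (v j)
       /\ forall x, -1/2 * Derive_n (v (j - 1)%nat) 2 x + pplus V c x * Derive (v j) x
                    + 1/2 * conv_sum v j x = Hs j) ->
  forall (vh : R -> R -> R) (Hh : R -> R),
    (forall h, 0 < h ->
       periodic1 (vh h) /\
       (forall x, ex_derive (vh h) x /\ ex_derive (Derive (vh h)) x) /\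
       (forall x, - h / 2 * Derive (Derive (vh h)) x
                  + 1/2 * (P + Derive (vh h) x) ^ 2 + V x = Hh h)) ->
  forall N : nat,
    exists C h0, 0 < h0 /\
      forall h, 0 < h < h0 ->
        L2T (fun x => Derive (vh h) x - Derive (hatv v h N) x)
          <= C * Rpower h (INR (N + 1) / 2).
Proof.
  intros V HVs HVp _ _ _ P c Habove Hcell v Hs Hv0 Hs0 Hvj vh Hh Hvh N.
  destruct (effective_hamiltonian_gap V (V_continuous V HVs) HVp P c Habove Hcell)
    as [d [Hd [Hgap HIP]]].
  destruct (L2T_hatv_derivative_error V P c d v Hs HVs HVp Hd Hgap HIP Hv0 Hs0
              (fun j Hj => proj1 (proj2 (Hvj j Hj)))
              (fun j Hj => proj1 (proj2 (proj2 (Hvj j Hj))))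
              (fun j Hj => proj2 (proj2 (proj2 (Hvj j Hj)))) vh Hh Hvh N)
    as [C [h0 [Hh0 [HC Herr]]]].
  exists C, (Rmin h0 1); split; [apply Rmin_pos; lra |].
  intros h [Hpos Hlt]; apply Rmin_Rgt in Hlt.
  apply Rle_trans with (C * h ^ (N + 1)); [apply Herr; lra |].
  apply Rmult_le_compat_l; [exact HC | apply pow_le_Rpower_half; lra].
Qed.
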